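(* Let $\mathbb{F}$ be a field of characteristic different from $2$ and $\mathcal{J}Spin_n(\mathbb{F})$ the spin factor. Then every 2-local 1-automorphism of $\mathcal{J}Spin_n(\mathbb{F})$ is an automorphism.
   Context: $\mathcal{J}Spin_n(\mathbb{F})$ is the Jordan algebra with basis $\mathbf{1},s_1,\dots,s_n$ and product determined bilinearly by $\mathbf{1}$ being the identity, $s_is_i=\mathbf{1}$, and $s_is_j=0$ for $i\neq j$. A symmetry is an element $s$ with $s^2=\mathbf{1}$, and $U_s(x)=2s(sx)-x$. A 2-local 1-automorphism is a map $\Delta$ (not assumed linear) such that for every $x,y$ there is a symmetry $s$ with $\Delta(x)=U_s(x)$ and $\Delta(y)=U_s(y)$. *)

From HB Require Import structures.
From mathcomp Require Import all_boot all_order all_algebra.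
Set Implicit Arguments. Unset Strict Implicit. Unset Printing Implicit Defensive.
Import GRing.Theory.
Local Open Scope ring_scope.

(* The spin factor JSpin_n(F): the F-vector space F*1 (+) F^n, an element
   (a, v) standing for a*1 + sum_i v_i s_i.  *)
Definition jspin (F : fieldType) (n : nat) : Type := (F * 'rV[F]_n)%type.

Section JSpin.
Variables (F : fieldType) (n : nat).

Definition jone : jspin F n := (1, 0).
Definition jadd (x y : jspin F n) : jspin F n := (x.1 + y.1, x.2 + y.2).
Definition jscale (a : F) (x : jspin F n) : jspin F n := (a * x.1, a *: x.2).
Definition jsub (x y : jspin F n) : jspin F n := (x.1 - y.1, x.2 - y.2).

(* Bilinear extension of 1 identity, s_i s_i = 1, s_i s_j = 0 (i <> j):
   (a1 + v)(b1 + w) = (ab + sum_i v_i w_i) 1 + (a w + b v). *)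
Definition jmul (x y : jspin F n) : jspin F n :=
  (x.1 * y.1 + \sum_(i < n) x.2 0 i * y.2 0 i, x.1 *: y.2 + y.1 *: x.2).

Definition jsymmetry (s : jspin F n) : Prop := jmul s s = jone.

Definition jU (s x : jspin F n) : jspin F n :=
  jsub (jscale 2 (jmul s (jmul s x))) x.

Definition jlinear (f : jspin F n -> jspin F n) : Prop :=
  forall (a : F) (x y : jspin F n), f (jadd (jscale a x) y) = jadd (jscale a (f x)) (f y).

Definition jautomorphism (f : jspin F n -> jspin F n) : Prop :=
  [/\ jlinear f, bijective f & forall x y, f (jmul x y) = jmul (f x) (f y)].

Definition two_local_1_automorphism (D : jspin F n -> jspin F n) : Prop :=
  forall x y : jspin F n, exists s : jspin F n,
    [/\ jsymmetry s, D x = jU s x & D y = jU s y].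

End JSpin.

From mathcomp Require Import all_boot all_order all_algebra ring.
Import GRing.Theory.
Local Open Scope ring_scope.

Set Implicit Arguments.
Unset Strict Implicit.

(* Squaring s = a1 + v gives a^2 + v.v = 1 and 2av = 0, so a symmetry is
   either a scalar with a^2 = 1 or a unit vector v.  Either way U_s fixes the
   scalar part and multiplies the vector part by an orthogonal matrix (the
   identity, or w |-> 2(v.w)v - w).  Applying 2-locality to suitable pairs, a
   2-local 1-automorphism D fixes scalar parts, its vector part phi depends
   only on the vector part of the argument, and phi preserves the dot
   product.  A dot-preserving self-map of F^n, linear or not, is right
   multiplication by the orthogonal matrix whose rows are the images of the
   unit vectors; and every orthogonal matrix induces an automorphism. *)

Section JSpinOrthogonal.
Variables (F : fieldType) (n : nat).
Implicit Types (v w : 'rV[F]_n) (x y s : jspin F n) (P Q : 'M[F]_n).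

Definition jdot v w : F := \sum_(i < n) v 0 i * w 0 i.

Definition jorthmap Q x : jspin F n := (x.1, x.2 *m Q).

Lemma jmulE x y : jmul x y = (x.1 * y.1 + jdot x.2 y.2, x.1 *: y.2 + y.1 *: x.2).
Proof. by []. Qed.

Lemma mulmx_trE m p (A : 'M[F]_(m, n)) (B : 'M[F]_(p, n)) i j :
  (A *m B^T) i j = jdot (row i A) (row j B).
Proof. by rewrite mxE; apply: eq_bigr => k _; rewrite !mxE. Qed.

Lemma jdotE v w : jdot v w = (v *m w^T) 0 0.
Proof. by rewrite mulmx_trE !row_id. Qed.

Lemma jdotC v w : jdot v w = jdot w v.
Proof. by apply: eq_bigr => i _; rewrite mulrC. Qed.

Lemma jdotZr a v w : jdot v (a *: w) = a * jdot v w.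
Proof. by rewrite /jdot mulr_sumr; apply: eq_bigr => i _; rewrite mxE mulrCA. Qed.

Lemma jdot0r v : jdot v 0 = 0.
Proof. by rewrite /jdot big1 // => i _; rewrite mxE mulr0. Qed.

Lemma jdot0l w : jdot 0 w = 0.
Proof. by rewrite jdotC jdot0r. Qed.

Lemma jdot_mulmx P v w : P *m P^T = 1%:M -> jdot (v *m P) (w *m P) = jdot v w.
Proof. by move=> PPt; rewrite !jdotE trmx_mul mulmxA -(mulmxA v) PPt mulmx1. Qed.

Lemma jautomorphism_orthogonal P (f : jspin F n -> jspin F n) :
  P *m P^T = 1%:M -> f =1 jorthmap P -> jautomorphism f.
Proof.
move=> PPt fE; have PtP := mulmx1C PPt.
split=> [a x y | | x y].
- by rewrite !fE /jorthmap /= mulmxDl -scalemxAl.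
- exists (jorthmap P^T) => x; rewrite ?fE /jorthmap /= -mulmxA.
    by rewrite PPt mulmx1 -surjective_pairing.
  by rewrite PtP mulmx1 -surjective_pairing.
- by rewrite !fE !jmulE /= jdot_mulmx // /jorthmap /= mulmxDl -!scalemxAl.
Qed.

Lemma dot_preserving_mulmx (phi : 'rV[F]_n -> 'rV[F]_n) :
    (forall v w, jdot (phi v) (phi w) = jdot v w) ->
  exists2 P, P *m P^T = 1%:M & forall w, phi w = w *m P.
Proof.
move=> phi_dot; pose P : 'M[F]_n := \matrix_i phi (delta_mx 0 i).
have PPt : P *m P^T = 1%:M.
  apply/matrixP => i j; rewrite mulmx_trE !rowK phi_dot -!row1.
  by rewrite -mulmx_trE trmx1 mulmx1.
exists P => // w.
have phiPt : phi w *m P^T = w.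
  apply/rowP => j; rewrite mulmx_trE rowK row_id phi_dot -row1.
  by rewrite -[w in jdot w](row_id 0) -mulmx_trE trmx1 mulmx1.
by rewrite -[LHS]mulmx1 -(mulmx1C PPt) mulmxA phiPt.
Qed.

Lemma line_reflection_orthogonal v :
  jdot v v = 1 -> let Q := 2 *: (v^T *m v) - 1%:M in Q *m Q^T = 1%:M.
Proof.
move=> vv1 /=; set M := v^T *m v.
have MM : M *m M = M.
  by rewrite mulmxA -(mulmxA v^T) [v *m _]mx11_scalar -jdotE vv1 mulmx1.
rewrite linearB /= linearZ /= trmx1 trmx_mul trmxK -/M.
rewrite mulmxBl !mulmxBr -!scalemxAl -!scalemxAr MM !mulmx1 !mul1mx scalerA.
by apply/matrixP => i j; rewrite !mxE; ring.
Qed.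

Hypothesis two_neq0 : (2 : F) != 0.

Lemma jU_orthogonal s :
  jsymmetry s -> exists2 Q, Q *m Q^T = 1%:M & jU s =1 jorthmap Q.
Proof.
case: s => a v; rewrite /jsymmetry jmulE /= => -[sq1 av0].
have : (2 * a) *: v = 0 by rewrite mulr_natl mulr2n scalerDl.
move/eqP; rewrite scaler_eq0 mulf_eq0 (negbTE two_neq0) /=.
case/orP => [/eqP a0 | /eqP v0].
- rewrite a0 mul0r add0r in sq1; subst a.
  exists (2 *: (v^T *m v) - 1%:M); first exact: line_reflection_orthogonal.
  case=> b w; rewrite /jU /jsub /jscale /jorthmap !jmulE /=.
  rewrite !(mul0r, add0r, scale0r) jdotZr sq1 mulr1 mulmxBr mulmx1 -scalemxAr.
  rewrite mulmxA [w *m _]mx11_scalar mul_scalar_mx -jdotE jdotC.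
  by rewrite mulr_natl mulr2n addrK.
- rewrite v0 jdot0r addr0 in sq1 *; exists 1%:M; first by rewrite trmx1 mulmx1.
  case=> b w; rewrite /jU /jsub /jscale /jorthmap !jmulE /=.
  rewrite !(scaler0, jdot0l, addr0, mulmx1) [a * (a * _)]mulrA.
  rewrite [a *: (a *: _)]scalerA !sq1 mul1r scale1r.
  by rewrite mulr_natl scaler_nat !mulr2n !addrK.
Qed.

Lemma two_local_jorthmap (D : jspin F n -> jspin F n) :
  two_local_1_automorphism D -> exists2 P, P *m P^T = 1%:M & D =1 jorthmap P.
Proof.
move=> D2loc.
have D2orth x y :
    exists2 Q, Q *m Q^T = 1%:M & D x = jorthmap Q x /\ D y = jorthmap Q y.
  by have [s [/jU_orthogonal[Q QQt UQ] -> ->]] := D2loc x y; exists Q; rewrite ?UQ.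
pose phi w := (D (0, w)).2.
have phi_dot v w : jdot (phi v) (phi w) = jdot v w.
  by rewrite /phi; have [Q QQt [-> ->]] := D2orth (0, v) (0, w); apply: jdot_mulmx.
have [P PPt phiP] := dot_preserving_mulmx phi_dot.
exists P => // x; have [Q _ [-> Dx2]] := D2orth x (0, x.2).
by rewrite /jorthmap -phiP /phi Dx2.
Qed.

End JSpinOrthogonal.

Lemma pchar2_neq0 (R : nzSemiRingType) : 2%N \notin [pchar R] -> (2 : R) != 0.
Proof. by apply: contra => two_eq0; rewrite inE two_eq0. Qed.

Theorem theorem4p5 (F : fieldType) (n : nat) (hF : (2%N \notin [pchar F]%R))
  (D : jspin F n -> jspin F n) :
  two_local_1_automorphism D -> jautomorphism D.
Proof.
move=> D2loc; have [P PPt DP] := two_local_jorthmap (pchar2_neq0 hF) D2loc.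
exact: jautomorphism_orthogonal PPt DP.
Qed.
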